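(* Let $p\ge0$, $q\ge1$, $\mathbf{k}=(k_1,\dots,k_r)$ with $k_i\ge1$, and let $Z\in\tilde V_{\mathbf{k}}(\mathbb{R}^{p,q})$ (if $q=1$, let $Z$ lie in the component $\tilde V_{\mathbf{k}}(\mathbb{R}^{p,1})_\Sigma$ for a fixed $\Sigma\in\prod_i\mathfrak{S}_{k_i}$). Then there is a unique ray partition $Q^Z$ of type $\mathbf{k}$ which is witnessed by $Z$ and has maximal weight among all ray partitions of type $\mathbf{k}$ witnessed by $Z$. If $q=1$, moreover $\Sigma(Q^Z)=\Sigma$.
   Context: $d=p+q$; points of $\mathbb{R}^d$ are written $(\zeta,t)\in\mathbb{R}^{d-1}\times\mathbb{R}$, with projections $\mathrm{pr}_\zeta$, $\mathrm{pr}_t$; $\mathrm{pr}_1:\mathbb{R}^d\to\mathbb{R}^p$ is the projection to the first $p$ coordinates. $\tilde V_{\mathbf{k}}(\mathbb{R}^{p,q})\subseteq\prod_i(\mathbb{R}^d)^{k_i}$ consists of tuples $Z=(z_i^j)$ of pairwise distinct points with $\mathrm{pr}_1(z_i^1)=\dots=\mathrm{pr}_1(z_i^{k_i})$ for each $i$. For $q=1$ and $\Sigma=(\sigma_i)$, $\tilde V_{\mathbf{k}}(\mathbb{R}^{p,1})_\Sigma$ is the set of such $Z$ with $\mathrm{pr}_t(z_i^{\sigma_i(j)})<\mathrm{pr}_t(z_i^{\sigma_i(j+1)})$ for all $i$, $j$. Table $T_{\mathbf{k}}=\{(i,j):1\le i\le r,1\le j\le k_i\}$ with lexicographic order $<$.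 A ray partition $Q$ of type $\mathbf{k}$: a partition of $T_{\mathbf{k}}$ into nonempty pieces $Q_1,\dots,Q_l$, each with a total order $\prec_\beta$, with $\min(Q_1,<)<\dots<\min(Q_l,<)$ and $\min(Q_\beta,\prec_\beta)=\min(Q_\beta,<)$ for all $\beta$. $Q$ is witnessed by $Z$ if (W1) for each $\beta$, all $z_i^j$ with $(i,j)\in Q_\beta$ have the same image under $\mathrm{pr}_\zeta$, and (W2) $(i,j)\prec_\beta(i',j')$ implies $\mathrm{pr}_t(z_i^j)<\mathrm{pr}_t(z_{i'}^{j'})$. The weight of $Q$ is $\omega(Q)=(|Q_1|,\dots,|Q_l|)$, an element of the set $\mathbb{P}(\mathbf{k})$ of sequences of positive integers summing to $|\mathbf{k}|$; these are compared lexicographically after padding with zeros to length $|\mathbf{k}|$. For $q=1$, $\Sigma(Q)=(\sigma_1,\dots,\sigma_r)$ is defined via the stacked total order $\prec$ on $T_{\mathbf{k}}$ (restricting to $\prec_\beta$ on $Q_\beta$, with all elements of $Q_{\beta+1}$ smaller than those of $Q_\beta$): $\sigma_i$ is the unique permutation with $(i,\sigma_i(j))\prec(i,\sigma_i(j+1))$ for all $j$. *)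

From HB Require Import structures.
From mathcomp Require Import all_boot all_order all_algebra all_fingroup.
From mathcomp Require Import reals.
Set Implicit Arguments. Unset Strict Implicit. Unset Printing Implicit Defensive.
Import Order.TTheory GRing.Theory Num.Theory.
Local Open Scope ring_scope.

(* Points of R^n are row vectors 'rV[R]_n, coordinates are
   0-based: coordinate l of x is x 0 l.  The table T_k is the finite type
   {i : 'I_r & 'I_(k i)} (both indices 0-based). *)

Section Defs.
Variable R : realType.

Definition coord n (x : 'rV[R]_n) (l : nat) : R :=
  if insub l is Some o then x 0 o else 0.

Definition pr_t n (x : 'rV[R]_n) : R := coord x n.-1.
Definition pr_zeta n (x : 'rV[R]_n) : 'rV[R]_(n.-1) := \row_(l < n.-1) coord x l.
Definition pr_1 p n (x : 'rV[R]_n) : 'rV[R]_p := \row_(l < p) coord x l.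

Variables (r : nat) (k : 'I_r -> nat).
Local Notation T := {i : 'I_r & 'I_(k i)}.
Local Notation ij i j := (@Tagged 'I_r i (fun i => 'I_(k i)) j).

Definition tlt (a b : T) : bool :=
  (tag a < tag b)%N || ((tag a == tag b) && (tagged a < tagged b)%N).

Definition in_Vtilde p q (Z : T -> 'rV[R]_(p + q)) : Prop :=
  injective Z /\
  forall (i : 'I_r) (j j' : 'I_(k i)), pr_1 p (Z (ij i j)) = pr_1 p (Z (ij i j')).

(* A ray partition Q_1,...,Q_l is encoded as the list [:: Q_1; ...; Q_l],
   each piece Q_beta being the list of its elements in increasing
   prec_beta order. *)
Definition is_ray_partition (Q : seq (seq T)) : Prop :=
  [/\ perm_eq (flatten Q) (enum {: T}),
      all (fun s => s != [::]) Q,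
      all (fun s => if s is x :: s' then all (tlt x) s' else true) Q
                                   (* min(Q_b, prec_b) = min(Q_b, <) *) &
      sorted tlt (pmap ohead Q)].  (* min(Q_1,<) < ... < min(Q_l,<) *)

Definition witnessed p q (Z : T -> 'rV[R]_(p + q)) (Q : seq (seq T)) : Prop :=
  forall s, s \in Q ->
    (forall x y, x \in s -> y \in s -> pr_zeta (Z x) = pr_zeta (Z y)) /\
    pairwise (fun x y => pr_t (Z x) < pr_t (Z y)) s.

Definition weight (Q : seq (seq T)) : seq nat := map size Q.

Fixpoint lex_le (s t : seq nat) : bool :=
  match s, t with
  | [::], _ => true
  | _ :: _, [::] => false
  | a :: s', b :: t' => (a < b)%N || ((a == b) && lex_le s' t')
  end.

Definition pad (N : nat) (w : seq nat) : seq nat := w ++ nseq (N - size w) 0%N.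

Definition weight_le (w1 w2 : seq nat) : bool :=
  lex_le (pad (\sum_(i < r) k i) w1) (pad (\sum_(i < r) k i) w2).

Definition max_witnessed p q (Z : T -> 'rV[R]_(p + q)) (Q : seq (seq T)) : Prop :=
  [/\ is_ray_partition Q, witnessed Z Q &
      forall Q', is_ray_partition Q' -> witnessed Z Q' ->
        weight_le (weight Q') (weight Q)].

Definition in_component p q (Z : T -> 'rV[R]_(p + q))
    (Sg : forall i : 'I_r, {perm 'I_(k i)}) : Prop :=
  forall (i : 'I_r) (j j' : 'I_(k i)), j.+1 = j' :> nat ->
    pr_t (Z (ij i (Sg i j))) < pr_t (Z (ij i (Sg i j'))).

(* stacked total order: list of T in increasing prec order is Q_l ++ ... ++ Q_1 *)
Definition stacked_lt (Q : seq (seq T)) (x y : T) : bool :=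
  (index x (flatten (rev Q)) < index y (flatten (rev Q)))%N.

(* Sigma(Q) = Sg : each sigma_i is the (unique) permutation with
   (i, sigma_i(j)) prec (i, sigma_i(j+1)) for all j *)
Definition Sigma_of_eq (Q : seq (seq T)) (Sg : forall i : 'I_r, {perm 'I_(k i)}) : Prop :=
  forall (i : 'I_r) (j j' : 'I_(k i)), j.+1 = j' :> nat ->
    stacked_lt Q (ij i (Sg i j)) (ij i (Sg i j')).

End Defs.

From HB Require Import structures.
From mathcomp Require Import all_boot all_order all_algebra all_fingroup.
From mathcomp Require Import reals.
Set Implicit Arguments. Unset Strict Implicit. Unset Printing Implicit Defensive.
Import Order.TTheory.

(* The maximal ray partition is built greedily.  The lexicographically smallest
   cell m heads the first ray of every ray partition, and a witnessed first ray
   can only contain cells above m on the same vertical line (same zeta, larger t).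
   Taking all of them, sorted by t, maximises the first weight, and a witnessed
   ray partition attaining it has exactly this first ray; recursing on the
   remaining cells gives maximality and uniqueness.  For q = 1 the cells of a row
   lie on one vertical line, and the stacked order of the greedy partition sorts
   every vertical line by t, which is the order recorded by Sigma. *)

Lemma lex_le_refl : reflexive lex_le.
Proof. by elim=> //= a s ->; rewrite eqxx orbT. Qed.

Lemma lex_le_anti s u : lex_le s u -> lex_le u s -> s = u.
Proof.
elim: s u => [|a s IH] [|b u] //=.
move=> /orP[ab | /andP[/eqP<- su]] /orP[ba | /andP[/eqP ba us]].
- by have := ltn_trans ab ba; rewrite ltnn.
- by rewrite ba ltnn in ab.
- by rewrite ltnn in ba.
- by rewrite (IH u su us).
Qed.

Lemma pad_cons N a w : pad N (a :: w) = a :: pad N.-1 w.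
Proof. by rewrite /pad /= subnS predn_sub. Qed.

Lemma pad_inj N w1 w2 : all (fun n => 0 < n) w1 -> all (fun n => 0 < n) w2 ->
  pad N w1 = pad N w2 -> w1 = w2.
Proof.
elim: w1 w2 N => [|a w1 IH] [|b w2] N //=; rewrite ?pad_cons.
- case: N => [|N] //= _ /andP[b_pos _]; rewrite /pad subn0 => -[b0].
  by rewrite -b0 in b_pos.
- case: N => [|N] //= /andP[a_pos _] _; rewrite /pad subn0 => -[a0].
  by rewrite a0 in a_pos.
by move=> /andP[_ w1_pos] /andP[_ w2_pos] [-> /IH->].
Qed.

Lemma mem_flatten_rev (T : eqType) (Q : seq (seq T)) : flatten (rev Q) =i flatten Q.
Proof.
by move=> x; apply/flattenP/flattenP => -[s sQ xs]; exists s; rewrite ?mem_rev in sQ *.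
Qed.

Lemma pmap_ohead_sub_flatten (T : eqType) (Q : seq (seq T)) :
  {subset pmap ohead Q <= flatten Q}.
Proof.
move=> h; rewrite mem_pmap => /mapP[[|x s] sQ //= [->]].
by apply/flattenP; exists (x :: s); rewrite ?mem_head.
Qed.

Lemma perm_filterC_cat (T : eqType) (a : pred T) s s1 s2 : uniq s ->
  perm_eq (s1 ++ s2) s -> s1 =i [seq x <- s | a x] -> perm_eq s2 [seq x <- s | ~~ a x].
Proof.
move=> s_uniq s_perm s1E; rewrite -(perm_cat2l [seq x <- s | a x]).
have s1_uniq : uniq s1.
  by move: s_uniq; rewrite -(perm_uniq s_perm) cat_uniq => /andP[].
apply: (@perm_trans _ s); last by rewrite perm_sym; apply: permEl (perm_filterC a s).
by apply: perm_trans s_perm; rewrite perm_cat2r perm_sym uniq_perm ?filter_uniq.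
Qed.

Section GreedyRays.
Variables (T V : eqType) (d : Order.disp_t) (O : orderType d).
Variables (ltT : rel T) (zeta : T -> V) (t : T -> O).

Local Open Scope order_scope.

Lemma sort_lt_sorted_by (s : seq T) : {in s &, injective t} -> uniq s ->
  sorted (relpre t <%O) (sort (relpre t <=%O) s).
Proof.
move=> t_inj s_uniq.
by rewrite -sorted_map -sort_map sort_lt_sorted (map_inj_in_uniq t_inj).
Qed.

Lemma index_lt_sorted_by (s : seq T) x y : sorted (relpre t <%O) s ->
  x \in s -> y \in s -> t x < t y -> (index x s < index y s)%N.
Proof.
move=> s_sorted xs ys txy; rewrite ltnNge leq_eqVlt negb_or; apply/andP; split.
  apply: contraTneq txy => /(congr1 (nth x s)); rewrite !nth_index // => <-.
  by rewrite ltxx.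
apply: contraTN txy => /(sorted_ltn_index (relpre_trans lt_trans) s_sorted y x ys xs).
by move=> /= /lt_gtF ->.
Qed.

Definition above (m y : T) : bool := (zeta y == zeta m) && (t m < t y).

Fixpoint greedy_rays (n : nat) (s : seq T) : seq (seq T) :=
  match n, s with
  | n'.+1, m :: s' =>
      (m :: sort (relpre t <=%O) [seq y <- s' | above m y])
        :: greedy_rays n' [seq y <- s' | ~~ above m y]
  | _, _ => [::]
  end.

Definition ray_partition_of (S : seq T) (Q : seq (seq T)) : Prop :=
  [/\ perm_eq (flatten Q) S, all (fun s => s != [::]) Q,
      all (fun s => if s is x :: s' then all (ltT x) s' else true) Q &
      sorted ltT (pmap ohead Q)].

Definition witnessed_by (Q : seq (seq T)) : Prop :=
  forall s, s \in Q ->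
    (forall x y, x \in s -> y \in s -> zeta x = zeta y) /\
    pairwise (relpre t <%O) s.

Hypotheses (ltT_irr : irreflexive ltT) (ltT_tr : transitive ltT).
Hypothesis zeta_t_inj : forall x y, zeta x = zeta y -> t x = t y -> x = y.

Lemma sort_above_sorted m s : uniq s ->
  sorted (relpre t <%O) (sort (relpre t <=%O) [seq y <- s | above m y]).
Proof.
move=> s_uniq; apply: sort_lt_sorted_by (filter_uniq _ s_uniq) => x y.
rewrite !mem_filter => /andP[/andP[/eqP zx _] _] /andP[/andP[/eqP zy _] _].
by apply: zeta_t_inj; rewrite zx zy.
Qed.

Lemma greedy_rays_witnessed n S : uniq S -> witnessed_by (greedy_rays n S).
Proof.
elim: n S => [|n IH] [|m S'] //= /andP[_ S'_uniq] s; rewrite inE.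
case/orP=> [/eqP-> | ]; last exact/IH/filter_uniq.
have ray_zeta z : z \in m :: sort (relpre t <=%O) [seq y <- S' | above m y] ->
    zeta z = zeta m.
  by rewrite inE mem_sort mem_filter => /orP[/eqP-> | /andP[/andP[/eqP-> _] _]].
split=> [x y /ray_zeta-> /ray_zeta-> // | /=].
rewrite -sorted_pairwise; last exact: relpre_trans lt_trans.
rewrite sort_above_sorted // andbT all_sort.
by apply/allP => y; rewrite mem_filter => /andP[/andP[_ tmy] _].
Qed.

Lemma greedy_rays_partition n S : (size S <= n)%N -> sorted ltT S ->
  ray_partition_of S (greedy_rays n S).
Proof.
elim: n S => [|n IH] [|m S'] //= S_size S_sorted; try by split.
set B := [seq y <- S' | above m y]; set C := [seq y <- S' | ~~ above m y].
have C_size : (size C <= n)%N by rewrite size_filter (leq_trans (count_size _ _)).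
have [C_perm C_ne C_min C_sorted] :=
  IH C C_size (sorted_filter ltT_tr _ (path_sorted S_sorted)).
have m_min : all (ltT m) S' := order_path_min ltT_tr S_sorted.
split=> //=.
- rewrite perm_cons (perm_trans _ (permEl (perm_filterC (above m) S'))) //.
  by apply: perm_cat; rewrite ?perm_sort.
- rewrite C_min andbT all_sort; apply/allP => y.
  by rewrite mem_filter => /andP[_ /(allP m_min)].
- rewrite path_min_sorted //; apply/allP => h /pmap_ohead_sub_flatten.
  by rewrite (perm_mem C_perm) mem_filter => /andP[_ /(allP m_min)].
Qed.

Lemma ray_partition_of_size_pos S Q : ray_partition_of S Q ->
  all (fun n => 0 < n)%N (map size Q).
Proof.
by case=> _ Q_ne _ _; rewrite all_map; apply: sub_all Q_ne => s; rewrite /= lt0n size_eq0.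
Qed.

Lemma first_ray_head_min S m0 s1 Q : ray_partition_of S ((m0 :: s1) :: Q) ->
  {in S, forall x, x != m0 -> ltT m0 x}.
Proof.
case=> Q_perm _ /andP[m0_s1 Q_min] Q_sorted x.
rewrite -(perm_mem Q_perm) /= inE mem_cat => /orP[/eqP-> | ]; first by rewrite eqxx.
case/orP=> [/(allP m0_s1) // | /flattenP[[|h s] sQ //]] xs _.
have m0h : ltT m0 h.
  apply: (allP (order_path_min ltT_tr Q_sorted)).
  by rewrite mem_pmap; apply/mapP; exists (h :: s).
move: xs; rewrite inE => /orP[/eqP-> // | xs].
exact: ltT_tr m0h (allP (allP Q_min _ sQ) x xs).
Qed.

Lemma ray_partition_of_nil Q : ray_partition_of [::] Q -> Q = [::].
Proof. by case: Q => [|[|x s] Q] // [] // /perm_size. Qed.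

Lemma first_ray_head m S' Q : sorted ltT (m :: S') -> ray_partition_of (m :: S') Q ->
  exists s1 Qr, Q = (m :: s1) :: Qr.
Proof.
move=> S_sorted Q_rp; case: Q Q_rp => [[/perm_size] | [|m0 s1] Qr Q_rp] //.
  by case: Q_rp => _ /andP[].
exists s1, Qr; congr ((_ :: _) :: _); apply/eqP; apply: contraT => m0_neq_m.
have m0_S' : m0 \in S'.
  have [Q_perm _ _ _] := Q_rp.
  by have := perm_mem Q_perm m0; rewrite /= !inE eqxx (negbTE m0_neq_m) /= => <-.
have := first_ray_head_min Q_rp (mem_head m S'); rewrite eq_sym => /(_ m0_neq_m).
by move/(ltT_tr (allP (order_path_min ltT_tr S_sorted) _ m0_S')); rewrite ltT_irr.
Qed.

Lemma first_ray_sub_above m S' s1 Q : ray_partition_of (m :: S') ((m :: s1) :: Q) ->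
  witnessed_by ((m :: s1) :: Q) -> {subset s1 <= [seq y <- S' | above m y]}.
Proof.
case=> Q_perm _ _ _ /(_ _ (mem_head _ _)) [ray_zeta /= /andP[m_below _]] y ys1.
have tmy : t m < t y := allP m_below y ys1.
rewrite mem_filter /above (ray_zeta y m) ?inE ?ys1 ?orbT ?eqxx // tmy /=.
have : y \in m :: S' by rewrite -(perm_mem Q_perm) /= inE mem_cat ys1 orbT.
by rewrite inE => /orP[/eqP ym | //]; rewrite ym ltxx in tmy.
Qed.

Lemma greedy_rays_max n S : (size S <= n)%N -> sorted ltT S ->
  forall Q, ray_partition_of S Q -> witnessed_by Q ->
  (forall N, lex_le (pad N (map size Q)) (pad N (map size (greedy_rays n S)))) /\
  (map size Q = map size (greedy_rays n S) -> Q = greedy_rays n S).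
Proof.
elim: n S => [|n IH] [|m S'] //= S_size S_sorted Q Q_rp Q_wit;
  try by rewrite (ray_partition_of_nil Q_rp); split=> // N; apply: lex_le_refl.
set B := [seq y <- S' | above m y]; set C := [seq y <- S' | ~~ above m y].
have C_size : (size C <= n)%N by rewrite size_filter (leq_trans (count_size _ _)).
have C_sorted : sorted ltT C := sorted_filter ltT_tr _ (path_sorted S_sorted).
have S'_uniq : uniq S' by case/andP: (@sorted_uniq _ _ ltT_tr ltT_irr (m :: S') S_sorted).
have [s1 [Qr Q_eq]] := first_ray_head S_sorted Q_rp; subst Q.
have s1_sub := first_ray_sub_above Q_rp Q_wit.
case: (Q_rp) => /= Q_perm Qr_ne /andP[_ Qr_min] Qr_sorted.
rewrite perm_cons in Q_perm.
have s1_uniq : uniq s1.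
  by move: S'_uniq; rewrite -(perm_uniq Q_perm) cat_uniq => /andP[].
have := uniq_leq_size s1_uniq s1_sub; rewrite leq_eqVlt size_sort.
case/orP=> [/eqP s1_size | s1_lt]; last first.
  split=> [N | [s1_size _]]; first by rewrite ltnS s1_lt.
  by rewrite s1_size ltnn in s1_lt.
have s1_B : s1 =i B := (uniq_min_size s1_uniq s1_sub (eq_leq (esym s1_size))).2.
have Qr_rp : ray_partition_of C Qr.
  by split=> //; [apply: perm_filterC_cat Q_perm s1_B | apply: path_sorted Qr_sorted].
have Qr_wit : witnessed_by Qr by move=> s sQ; apply: Q_wit; rewrite inE sQ orbT.
have [IH_le IH_eq] := IH C C_size C_sorted Qr Qr_rp Qr_wit.
split=> [N | [_ /IH_eq->]].
  by rewrite s1_size ltnn eqxx /= !subnS !predn_sub; apply: IH_le.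
congr ((m :: _) :: _); apply: (@irr_sorted_eq _ (relpre t <%O) (relpre_trans lt_trans)).
- by move=> x; apply: ltxx.
- by case: (Q_wit _ (mem_head _ _)) => _ /andP[_ /pairwise_sorted].
- exact: sort_above_sorted.
- by move=> x; rewrite mem_sort s1_B.
Qed.

Lemma greedy_rays_stacked n S : (size S <= n)%N -> sorted ltT S ->
  {in S &, forall x y, zeta x = zeta y -> t x < t y ->
    (index x (flatten (rev (greedy_rays n S)))
       < index y (flatten (rev (greedy_rays n S))))%N}.
Proof.
elim: n S => [|n IH] [|m S'] //= S_size S_sorted x y xS yS zxy txy.
set B := [seq y <- S' | above m y]; set C := [seq y <- S' | ~~ above m y].
set P := m :: sort (relpre t <=%O) B.
have C_size : (size C <= n)%N by rewrite size_filter (leq_trans (count_size _ _)).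
have C_sorted : sorted ltT C := sorted_filter ltT_tr _ (path_sorted S_sorted).
have [C_perm _ _ _] := greedy_rays_partition C_size C_sorted.
have P_ray z : z \in m :: S' -> z \notin C -> [/\ z \in P, zeta z = zeta m & t m <= t z].
  rewrite inE => /orP[/eqP-> _ | zS']; first by split; rewrite ?mem_head.
  rewrite mem_filter zS' andbT negbK => /andP[/eqP zz tmz].
  by rewrite /P inE mem_sort mem_filter zS' /above zz eqxx tmz orbT ltW.
rewrite rev_cons flatten_rcons !index_cat !mem_flatten_rev !(perm_mem C_perm).
case xC: (x \in C); case yC: (y \in C).
- exact: IH C_size C_sorted x y xC yC zxy txy.
- by apply: ltn_addr; rewrite index_mem mem_flatten_rev (perm_mem C_perm).
- have [_ zx tmx] := P_ray x xS (negbT xC).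
  move: yC; rewrite mem_filter => /andP[]; rewrite /above -zxy zx eqxx.
  by rewrite (le_lt_trans tmx txy).
have [xP _ _] := P_ray x xS (negbT xC); have [yP _ _] := P_ray y yS (negbT yC).
rewrite ltn_add2l; apply: index_lt_sorted_by => //.
have S_uniq := @sorted_uniq _ _ ltT_tr ltT_irr (m :: S') S_sorted.
have [_ P_pairwise] := @greedy_rays_witnessed n.+1 (m :: S') S_uniq P (mem_head _ _).
by rewrite sorted_pairwise //; exact: relpre_trans lt_trans.
Qed.

End GreedyRays.

Section Table.
Variables (r : nat) (k : 'I_r -> nat).
Local Notation table := {i : 'I_r & 'I_(k i)}.

Definition table_key (x : table) : nat *l nat := (tag x : nat, tagged x : nat).

Lemma table_key_inj : injective table_key.
Proof. by move=> [i a] [j b] [/val_inj ij]; subst j => /val_inj->. Qed.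

Lemma tltE (x y : table) : tlt x y = (table_key x < table_key y)%O.
Proof.
case: x y => [i a] [j b]; rewrite /tlt ltEprodlexi /= leEnat ltEnat.
have [ij | ij | /val_inj ij] := ltngtP i j.
- by [].
- by rewrite -val_eqE /= (gtn_eqF ij).
by subst j; rewrite eqxx.
Qed.

Lemma tlt_irr : irreflexive (@tlt r k).
Proof. by move=> x; rewrite tltE ltxx. Qed.

Lemma tlt_trans : transitive (@tlt r k).
Proof. by move=> y x z; rewrite !tltE; apply: lt_trans. Qed.

Definition table_enum : seq table := sort (relpre table_key <=%O) (enum {: table}).

Lemma table_enum_sorted : sorted (@tlt r k) table_enum.
Proof.
rewrite (@eq_sorted _ _ (relpre table_key <%O) tltE).
by apply: sort_lt_sorted_by; [move=> x y _ _; apply: table_key_inj | apply: enum_uniq].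
Qed.

Lemma is_ray_partitionP Q :
  is_ray_partition Q <-> ray_partition_of (@tlt r k) table_enum Q.
Proof. by rewrite /ray_partition_of /table_enum (permPr (permEl (perm_sort _ _))). Qed.

End Table.

Section Projections.
Variable R : realType.
Local Open Scope ring_scope.

Lemma coord_ord n (x : 'rV[R]_n) (l : 'I_n) : coord x l = x 0 l.
Proof. by rewrite /coord valK. Qed.

Lemma pr_zeta_t_inj n (x y : 'rV[R]_n) :
  pr_zeta x = pr_zeta y -> pr_t x = pr_t y -> x = y.
Proof.
move=> zeta_xy t_xy; apply/rowP => l; rewrite -!coord_ord.
have [l_lt | l_ge] := ltnP l n.-1.
  by have := congr1 (fun v : 'rV[R]_n.-1 => v 0 (Ordinal l_lt)) zeta_xy; rewrite !mxE.
suff -> : nat_of_ord l = n.-1 by [].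
apply/eqP; rewrite eqn_leq l_ge andbT -ltnS.
exact: leq_trans (ltn_ord l) (leqSpred n).
Qed.

Lemma pr_zeta_eq_of_pr_1 p (x y : 'rV[R]_(p + 1)) :
  pr_1 p x = pr_1 p y -> pr_zeta x = pr_zeta y.
Proof.
move=> xy; apply/rowP => l; rewrite !mxE.
have l_lt : (l < p)%N by apply: leq_trans (ltn_ord l) _; rewrite addn1.
by have := congr1 (fun v : 'rV[R]_p => v 0 (Ordinal l_lt)) xy; rewrite !mxE.
Qed.

End Projections.

Section MaxRayPartition.
Variables (R : realType) (p q r : nat) (k : 'I_r -> nat).
Variable Z : {i : 'I_r & 'I_(k i)} -> 'rV[R]_(p + q).
Hypothesis Z_Vtilde : in_Vtilde Z.

Let zeta_Z x := pr_zeta (Z x).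
Let t_Z x := pr_t (Z x).

Definition max_ray_partition : seq (seq {i : 'I_r & 'I_(k i)}) :=
  greedy_rays zeta_Z t_Z (size (table_enum k)) (table_enum k).

Let Z_zeta_t_inj x y : zeta_Z x = zeta_Z y -> t_Z x = t_Z y -> x = y.
Proof. by move=> zeta_xy t_xy; apply: (proj1 Z_Vtilde); apply: pr_zeta_t_inj. Qed.

Let greedy_max Q := greedy_rays_max (@tlt_irr r k) (@tlt_trans r k) Z_zeta_t_inj
  (leqnn _) (table_enum_sorted k) (Q := Q).

Lemma max_ray_partition_max : max_witnessed Z max_ray_partition.
Proof.
split.
- apply/is_ray_partitionP; exact: (greedy_rays_partition zeta_Z t_Z (@tlt_trans r k)
    (leqnn _) (table_enum_sorted k)).
- by apply: (greedy_rays_witnessed Z_zeta_t_inj); rewrite sort_uniq enum_uniq.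
- by move=> Q /is_ray_partitionP Q_rp Q_wit; apply: (greedy_max Q_rp Q_wit).1.
Qed.

Lemma max_witnessed_unique Q : max_witnessed Z Q -> Q = max_ray_partition.
Proof.
case=> /is_ray_partitionP Q_rp Q_wit Q_max.
have [/is_ray_partitionP G_rp G_wit _] := max_ray_partition_max.
have [Q_le Q_eq] := greedy_max Q_rp Q_wit; apply: Q_eq.
apply: (pad_inj (ray_partition_of_size_pos Q_rp) (ray_partition_of_size_pos G_rp)).
by apply: lex_le_anti (Q_le _) (Q_max _ (proj2 (is_ray_partitionP _) G_rp) G_wit).
Qed.

Lemma max_ray_partition_Sigma : q = 1%N ->
  forall Sg, in_component Z Sg -> Sigma_of_eq max_ray_partition Sg.
Proof.
move=> q1 Sg Z_Sg i j j' jj'.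
apply: (greedy_rays_stacked (@tlt_irr r k) (@tlt_trans r k) Z_zeta_t_inj (leqnn _)
  (table_enum_sorted k)); rewrite ?mem_sort ?mem_enum //; last exact: Z_Sg.
by subst q; apply: pr_zeta_eq_of_pr_1; apply: (proj2 Z_Vtilde).
Qed.

End MaxRayPartition.

Theorem lemma3p10 (R : realType) (p q r : nat) (k : 'I_r -> nat)
    (Z : {i : 'I_r & 'I_(k i)} -> 'rV[R]_(p + q)) :
  (1 <= q)%N -> (forall i, 1 <= k i)%N -> in_Vtilde Z ->
  exists Q : seq (seq {i : 'I_r & 'I_(k i)}),
    [/\ max_witnessed Z Q,
        (forall Q', max_witnessed Z Q' -> Q' = Q) &
        (q = 1%N -> forall Sg : (forall i : 'I_r, {perm 'I_(k i)}),
            in_component Z Sg -> Sigma_of_eq Q Sg)].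
Proof.
move=> _ _ Z_Vtilde; exists (max_ray_partition Z); split.
- exact: max_ray_partition_max.
- exact: max_witnessed_unique.
- exact: max_ray_partition_Sigma.
Qed.
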